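(* Under the setting below, every vertex of $G_{15}$ has degree at most $15$.
   Context: Setting: $V$ is a finite set of points (vertices) in the plane and $S$ a finite set of simple polygonal obstacles, pairwise non-intersecting, all of whose corners lie in $V$; each vertex is a corner of at most one obstacle and occurs at most once on its boundary. General position: no three vertices collinear and no two vertices on a line parallel to a cone boundary ray. Points $p,q$ are visible if segment $pq$ does not properly intersect any obstacle (touching at vertices or running along boundaries is allowed, meeting an obstacle interior is not). Cones: around each vertex $u$ the plane is partitioned into six cones of angle $\pi/3$ with apex $u$; $C_0^u$ has the upward vertical bisector, and counterclockwise the cones are $C_0^u,\overline{C_2^u},C_1^u,\overline{C_0^u},C_2^u,\overline{C_1^u}$ (positive cones $C_i$, negative cones $\overline{C_i}$, indices mod 3). If the obstacle having $u$ as a corner splits a cone so that there are vertices visible from $u$ on both sides of the obstacle within it, the cone is regarded as two subcones; otherwise a single subcone. $G_\infty$: for every vertex $u$ and every positive subcone of $u$, add an edge from $u$ to the vertex visible from $u$ in that subcone whose orthogonal projection onto the cone's bisector is closest to $u$. $G_{15}$ is obtained from $G_\infty$ by, for every vertex $u$ and every negative subcone of $u$, deleting all edges of $G_\infty$ incident to $u$ that lie in that subcone except the leftmost one (clockwise extreme as seen from $u$), the rightmost one (counterclockwise extreme), and the one to the closest vertex (smallest projection onto the cone's bisector). *)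

(* points of the plane are pairs of elements of a real
   closed field R (we need sqrt 3 for the cone directions). *)
From mathcomp Require Import all_boot all_order all_algebra.
Set Implicit Arguments. Unset Strict Implicit. Unset Printing Implicit Defensive.
Import Order.TTheory GRing.Theory Num.Theory.
Local Open Scope ring_scope.

Section Geom.
Variable R : rcfType.

Definition pt := (R * R)%type.

Definition psub (p q : pt) : pt := (p.1 - q.1, p.2 - q.2).
Definition padd (p q : pt) : pt := (p.1 + q.1, p.2 + q.2).
Definition pscale (t : R) (p : pt) : pt := (t * p.1, t * p.2).
Definition dot (p q : pt) : R := p.1 * q.1 + p.2 * q.2.
(* cross p q > 0  iff  q is counterclockwise from p *)
Definition cross (p q : pt) : R := p.1 * q.2 - p.2 * q.1.

Definition on_seg (a b z : pt) : Prop :=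
  exists t : R, 0 <= t <= 1 /\ z = padd a (pscale t (psub b a)).

(* A polygon is the cyclic sequence of its corners; edge i joins corner i to
   corner i+1 (mod n). *)
Definition corner (P : seq pt) (i : nat) : pt := nth (0, 0) P (i %% size P).
Definition pedges (P : seq pt) : seq (pt * pt) := zip P (rot 1 P).

Definition on_boundary (P : seq pt) (z : pt) : Prop :=
  exists2 e, e \in pedges P & on_seg e.1 e.2 z.

(* even-odd rule: number of crossings of the horizontal ray from z to the
   right with the boundary of P *)
Definition ray_crosses (z : pt) (e : pt * pt) : bool :=
  let a := e.1 in let b := e.2 in
  ((z.2 < a.2) != (z.2 < b.2)) &&
  (z.1 < a.1 + (z.2 - a.2) * (b.1 - a.1) / (b.2 - a.2)).

Definition poly_interior (P : seq pt) (z : pt) : Prop :=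
  ~ on_boundary P z /\ odd (count (ray_crosses z) (pedges P)).

Definition poly_region (P : seq pt) (z : pt) : Prop :=
  on_boundary P z \/ poly_interior P z.

Definition simple_polygon (P : seq pt) : Prop :=
  let n := size P in
  (3 <= n)%N /\ uniq P /\
  forall i j : nat, (i < j)%N -> (j < n)%N ->
    forall z, on_seg (corner P i) (corner P i.+1) z ->
              on_seg (corner P j) (corner P j.+1) z ->
      (j = i.+1 /\ z = corner P j) \/ (i = 0%N /\ j = n.-1 /\ z = corner P 0).

Definition collinear (a b c : pt) : Prop := cross (psub b a) (psub c a) = 0.

Definition s3 : R := Num.sqrt 3.

Definition setting (V : seq pt) (S : seq (seq pt)) : Prop :=
  [/\ uniq V,
      (forall O, O \in S -> simple_polygon O /\ {subset O <= V}),
      (forall i j : nat, (i < j)%N -> (j < size S)%N ->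
         forall z, ~ (poly_region (nth [::] S i) z /\ poly_region (nth [::] S j) z)),
      (* each vertex is a corner of at most one obstacle, at most once *)
      uniq (flatten S) &
      ((forall a b c, a \in V -> b \in V -> c \in V ->
         a != b -> b != c -> a != c -> ~ collinear a b c) /\
      (* no two vertices on a line parallel to a cone boundary ray
         (boundary directions: 0, 60 and 120 degrees) *)
      (forall a b, a \in V -> b \in V -> a != b ->
         let d := psub b a in
         [/\ d.2 != 0, d.2 != s3 * d.1 & d.2 != - (s3 * d.1)]))].

Definition visible (S : seq (seq pt)) (p q : pt) : Prop :=
  forall O, O \in S -> forall t : R, 0 <= t <= 1 ->
    ~ poly_interior O (padd p (pscale t (psub q p))).

(* The six cones around an apex are indexed counterclockwise by k = 0..5:
   0 : C_0, 1 : \bar C_2, 2 : C_1, 3 : \bar C_0, 4 : C_2, 5 : \bar C_1.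
   Cone k has angular range [60+60k, 120+60k] degrees and its bisector is
   the unit vector at angle 90+60k degrees. *)
Definition bisector (k : nat) : pt :=
  match k with
  | 0 => (0, 1)
  | 1 => (- (s3 / 2), 1 / 2)
  | 2 => (- (s3 / 2), - (1 / 2))
  | 3 => (0, -1)
  | 4 => (s3 / 2, - (1 / 2))
  | _ => (s3 / 2, 1 / 2)
  end.

(* d lies in the closed cone k: angle between d and bisector at most 30 deg *)
Definition in_cone (k : nat) (d : pt) : bool :=
  (0 < dot d (bisector k)) && (3 * dot d d <= 4 * (dot d (bisector k)) ^+ 2).

Definition cone_idx (u v : pt) : nat :=
  find (fun k => in_cone k (psub v u)) (iota 0 6).

Definition positive_cone (k : nat) : bool := ~~ odd k.

Definition proj (u : pt) (k : nat) (v : pt) : R := dot (psub v u) (bisector k).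

(* v and w (vertices seen from apex u) lie in the same subcone of u:
   same cone, and the obstacle having u as a corner does not enter the
   angular sector between the rays uv and uw (otherwise that obstacle splits
   the cone, and v, w lie on different sides of it). *)
Definition same_subcone (S : seq (seq pt)) (u v w : pt) : Prop :=
  cone_idx u v = cone_idx u w /\
  ~ (exists O, [/\ O \in S, u \in O &
       exists s t : R, [/\ 0 <= s, 0 <= t &
         exists2 eps : R, 0 < eps & forall r : R, 0 < r <= eps ->
           poly_interior O
             (padd u (pscale r (padd (pscale s (psub v u)) (pscale t (psub w u)))))]]).

Definition Ginf_adds (V : seq pt) (S : seq (seq pt)) (u v : pt) : Prop :=
  [/\ u \in V, v \in V, v != u, visible S u v /\
      positive_cone (cone_idx u v) &
      forall w, w \in V -> w != u -> visible S u w -> same_subcone S u v w ->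
        proj u (cone_idx u v) v <= proj u (cone_idx u v) w].

Definition Ginf_edge V S (u v : pt) : Prop := Ginf_adds V S u v \/ Ginf_adds V S v u.

(* the edge uv of G_infinity survives the pruning step performed at u:
   either v is not in a negative cone of u, or v is the leftmost
   (clockwise extreme), rightmost (counterclockwise extreme) or closest
   G_infinity-neighbour of u in the subcone of u containing v *)
Definition kept_at V S (u v : pt) : Prop :=
  positive_cone (cone_idx u v) \/
  let N := fun z => Ginf_edge V S u z /\ same_subcone S u v z in
  [\/ (forall z, N z -> 0 <= cross (psub v u) (psub z u)),
      (forall z, N z -> cross (psub v u) (psub z u) <= 0) |
      (forall z, N z -> proj u (cone_idx u v) v <= proj u (cone_idx u v) z)].

Definition G15_edge V S (u v : pt) : Prop :=
  [/\ Ginf_edge V S u v, kept_at V S u v & kept_at V S v u].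

End Geom.

(* Fix u and sort its G_15-neighbours by the cone of u containing them.
   Near u, the obstacle having u as a corner fills a wedge of directions: by
   the even-odd rule, the interior of a polygon near a corner is either the
   open convex sector spanned by its two incident edges or the complement of
   the closed one.  Visible neighbours avoid the wedge, and two neighbours in
   one cone share a subcone iff no nonnegative combination of their
   directions enters it.  Hence the neighbours of a cone lying on the same
   side of a boundary line of the wedge share a subcone, so a cone has at
   most two subcones; and a convex wedge entering a cone between two of its
   directions lies inside that cone, so at most one cone is split.  Pruning
   keeps at most one neighbour in a positive subcone (u added it as the
   closest vertex, and projections are distinct in general position) and
   three in a negative one (leftmost, rightmost, closest).  The split cone
   at most doubles its share, whence 3 * 1 + 3 * 3 + 3 = 15. *)

From Stdlib Require Import Classical.
From mathcomp Require Import all_boot all_order all_algebra.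
From mathcomp Require Import ring lra.
Import Order.TTheory GRing.Theory Num.Theory.
Local Open Scope ring_scope.
Set Implicit Arguments. Unset Strict Implicit.

Section ForSmall.
Variable R : realFieldType.
Implicit Types P Q : R -> Prop.

Definition for_small P := exists2 eps : R, 0 < eps & forall r, 0 < r -> r <= eps -> P r.

Lemma for_smallT P : (forall r, 0 < r -> P r) -> for_small P.
Proof. by move=> H; exists 1 => // r r0 _; apply: H. Qed.

Lemma for_small_and P Q : for_small P -> for_small Q -> for_small (fun r => P r /\ Q r).
Proof.
case=> e1 e10 H1 [e2 e20 H2]; exists (Num.min e1 e2); first by rewrite lt_min e10.
by move=> r r0; rewrite le_min => /andP[h1 h2]; split; [apply: H1|apply: H2].
Qed.

Lemma for_small_mono P Q : for_small P -> (forall r, 0 < r -> P r -> Q r) -> for_small Q.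
Proof. by case=> e e0 H HPQ; exists e => // r r0 re; apply: HPQ => //; apply: H. Qed.

Lemma for_small_const (p : Prop) : for_small (fun _ => p) -> p.
Proof. by case=> e e0 H; apply: (H e). Qed.

Lemma for_small_iff P (p : Prop) : for_small (fun r => P r <-> p) -> (for_small P <-> p).
Proof.
move=> H; split => [HP|Hp]; last by apply: (for_small_mono H) => r _ h; apply/h.
by apply: for_small_const; apply: (for_small_mono (for_small_and H HP)) => r _ [/[apply]].
Qed.

Lemma for_small_all (T : eqType) (s : seq T) (P : T -> R -> Prop) :
  (forall x, x \in s -> for_small (P x)) -> for_small (fun r => forall x, x \in s -> P x r).
Proof.
elim: s => [|y s IH] H; first by apply: for_smallT => r _ x.
have Hs : forall x, x \in s -> for_small (P x) by move=> x xs; apply: H; rewrite inE xs orbT.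
apply: (for_small_mono (for_small_and (H y (mem_head _ _)) (IH Hs))) => r _ [Py Ps] x.
by rewrite inE => /orP[/eqP->|/Ps].
Qed.

Lemma for_small_sign (f : R -> R) (c0 c1 : R) : (forall r, f r = c0 + r * c1) -> c0 != 0 ->
  for_small (fun r => (0 < f r) = (0 < c0) /\ (f r < 0) = (c0 < 0)).
Proof.
move=> Ef c00; have n0 : 0 < `|c0| by rewrite normr_gt0.
have d0 : 0 < `|c1| + 1 by rewrite ltr_wpDl.
exists (`|c0| / (`|c1| + 1)); first by rewrite divr_gt0.
move=> r r0; rewrite ler_pdivlMr // Ef => hr.
have /andP[h1 h2] : - `|c1| <= c1 <= `|c1| by rewrite -ler_norml.
have k1 : 0 <= r * (c1 + `|c1|) by apply: mulr_ge0; lra.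
have k2 : 0 <= r * (`|c1| - c1) by apply: mulr_ge0; lra.
case: (ltrgtP 0 c0) c00 => // hc _.
- rewrite (gtr0_norm hc) in hr; have h : 0 < c0 + r * c1 by nra.
  by rewrite h ltNge (ltW h).
- rewrite (ltr0_norm hc) in hr; have h : c0 + r * c1 < 0 by nra.
  by rewrite h ltNge (ltW h).
Qed.

Lemma for_small_gt0 (f : R -> R) (c0 c1 : R) : (forall r, f r = c0 + r * c1) -> c0 != 0 ->
  for_small (fun r => (0 < f r) = (0 < c0)).
Proof. by move=> Ef c00; apply: (for_small_mono (for_small_sign Ef c00)) => r _ []. Qed.

Lemma for_small_neq0 (f : R -> R) (c0 c1 : R) : (forall r, f r = c0 + r * c1) -> c0 != 0 ->
  for_small (fun r => f r != 0).
Proof.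
move=> Ef c00; apply: (for_small_mono (for_small_sign Ef c00)) => r _ [h1 h2].
by case: (ltrgtP 0 c0) c00 h1 h2 => // _ _ h1 h2; [rewrite gt_eqF ?h1 | rewrite lt_eqF ?h2].
Qed.

End ForSmall.

Section Sectors.
Variable R : rcfType.
Implicit Types A B d : pt R.

Lemma crossC A B : cross B A = - cross A B.
Proof. by rewrite /cross; ring. Qed.

Definition on_ray A d : bool := (cross A d == 0) && (0 <= dot A d).

Definition in_sector A B d : bool :=
  if 0 < cross A B then (0 < cross A d) && (0 < cross d B)
  else (cross A d < 0) && (cross d B < 0).

Definition in_closed_sector A B d : bool :=
  if 0 < cross A B then (0 <= cross A d) && (0 <= cross d B)
  else (cross A d <= 0) && (cross d B <= 0).

(* For small [r > 0], the rightward horizontal ray from [u + r d] meets the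
   edge from [u] to [u + A] iff [crosses_near A d]. *)
Definition crosses_near A d : bool :=
  ((d.2 < 0) != (0 < A.2)) &&
  (if 0 < A.2 then 0 < cross A d else cross A d < 0).

Lemma opposite_ray_sign A d : A.2 != 0 -> cross A d = 0 -> dot A d < 0 -> A.2 * d.2 < 0.
Proof.
case: A d => a1 a2 [d1 d2]; rewrite /cross /dot /= => ha hc hd.
have e : (a2 * d2) * (a1 ^+ 2 + a2 ^+ 2) =
         a2 ^+ 2 * (a1 * d1 + a2 * d2) + (a1 * a2) * (a1 * d2 - a2 * d1) by ring.
rewrite hc mulr0 addr0 in e.
have h2 : 0 < a2 ^+ 2 by case: (ltrgtP 0 a2) ha => // h _; nra.
have h3 : a2 ^+ 2 * (a1 * d1 + a2 * d2) < 0 by rewrite pmulr_rlt0.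
have h4 : 0 < a1 ^+ 2 + a2 ^+ 2 by nra.
by rewrite -e pmulr_llt0 in h3.
Qed.

Lemma in_sector_e1 A B : A.2 != 0 -> B.2 != 0 -> cross A B != 0 ->
  in_sector A B (1, 0) = ((0 < A.2) != (0 < B.2)) && ((0 < cross A B) == (0 < B.2)).
Proof.
case: A B => a1 a2 [b1 b2]; rewrite /in_sector /cross /= !mulr0 !mulr1 !mul1r !mul0r.
rewrite sub0r subr0 oppr_gt0 oppr_lt0.
by case: (ltrgtP 0 a2) => // _ _; case: (ltrgtP 0 b2) => // _ _; case: ifP.
Qed.

(* Each indicator on the left flips when [d] passes its own edge or the
   leftward horizontal; the latter flips cancel, so the parity only changes
   when [d] enters or leaves the sector. *)
Lemma crosses_near_parity A B d : A.2 != 0 -> B.2 != 0 -> cross A B != 0 ->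
  ~~ on_ray A d -> ~~ on_ray B d ->
  crosses_near A d (+) crosses_near B d = in_sector A B d (+) in_sector A B (1, 0).
Proof.
move=> hA hB hAB; rewrite in_sector_e1 //.
have hA' := opposite_ray_sign hA; have hB' := opposite_ray_sign hB.
move: hA hB hAB hA' hB'.
case: A B d => a1 a2 [b1 b2] [d1 d2].
rewrite /crosses_near /in_sector /on_ray /cross /dot /= => ha hb hab hra hrb.
have -> : d1 * b2 - d2 * b1 = - (b1 * d2 - b2 * d1) by ring.
rewrite oppr_gt0 oppr_lt0 !negb_and -!ltNge => h1 h2.
move: h1 h2.
case: (ltrgtP 0 a2) ha => // ha _;
case: (ltrgtP 0 b2) hb => // hb _;
case: (ltrgtP 0 (a1 * b2 - a2 * b1)) hab => // hab _;
case: (ltrgtP 0 d2) => hd;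
case: (ltrgtP 0 (a1 * d2 - a2 * d1)) => hx;
case: (ltrgtP 0 (b1 * d2 - b2 * d1)) => hy //= h1 h2; try by [].
all: exfalso; (try move: (hra (d1, d2) (esym hx) h1) => /= ?);
  (try move: (hrb (d1, d2) (esym hy) h2) => /= ?); nra.
Qed.

Lemma dot_ge0_collinear A B d : cross A d = 0 -> cross A B != 0 ->
  (0 <= dot A d) = (0 <= cross A B * cross d B).
Proof.
move=> hc hab.
have e : dot A d * cross A B = dot A A * cross d B + dot A B * cross A d.
  by rewrite /dot /cross; ring.
rewrite hc mulr0 addr0 in e.
have hA : 0 < dot A A.
  move: hab; case: A {e hc} => a1 a2; rewrite /dot /cross /= => hab.
  have /orP[h|h] : (a1 != 0) || (a2 != 0).
    by apply: contraNT hab; rewrite negb_or !negbK => /andP[/eqP-> /eqP->]; rewrite !mul0r subrr.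
  - have h2 : 0 < a1 ^+ 2 by rewrite exprn_even_gt0.
    nra.
  - have h2 : 0 < a2 ^+ 2 by rewrite exprn_even_gt0.
    nra.
have hsq : 0 < cross A B ^+ 2 by rewrite exprn_even_gt0.
have e2 : dot A d * cross A B ^+ 2 = dot A A * (cross A B * cross d B).
  by rewrite expr2 mulrA e; ring.
by rewrite -(pmulr_lge0 _ hsq) e2 pmulr_rge0.
Qed.

Lemma in_closed_sectorE A B d : cross A B != 0 ->
  in_closed_sector A B d = [|| in_sector A B d, on_ray A d | on_ray B d].
Proof.
move=> hab; rewrite /in_closed_sector /in_sector /on_ray.
have hba : cross B A != 0 by rewrite crossC oppr_eq0.
have rayA := dot_ge0_collinear (d := d) _ hab.
have rayB : cross d B = 0 -> (0 <= dot B d) = (0 <= cross A B * cross A d).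
  move=> hc; rewrite (dot_ge0_collinear (d := d) _ hba); last by rewrite crossC hc oppr0.
  by rewrite [cross B A]crossC [cross d A]crossC mulrNN.
rewrite [cross B d]crossC oppr_eq0.
case: (ltrgtP 0 (cross A B)) hab => // hs _;
case: (ltrgtP 0 (cross A d)) => hx;
case: (ltrgtP 0 (cross d B)) => hy /=; try by [].
all: try rewrite (rayA (esym hx)); try rewrite (rayB (esym hy)); rewrite ?orbF.
all: first [ by symmetry; apply/idP; nra | by symmetry; apply/negbTE; rewrite -ltNge; nra
           | by symmetry; apply/orP; left; nra ].
Qed.

Lemma crossing_parity_sector A B d (c : bool) :
  A.2 != 0 -> B.2 != 0 -> cross A B != 0 ->
  ~~ (on_ray A d || on_ray B d) && (c (+) crosses_near A d (+) crosses_near B d)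
  = if ~~ (c (+) in_sector A B (1, 0)) then in_sector A B d else ~~ in_closed_sector A B d.
Proof.
move=> hA hB hAB; rewrite in_closed_sectorE //.
have [hR|/norP[nA nB]] := boolP (on_ray A d || on_ray B d).
  have -> : in_sector A B d = false.
    case/orP: hR; rewrite /in_sector /on_ray => /andP[/eqP h _].
      by rewrite h ltxx; case: ifP.
    move: h; rewrite crossC => /eqP; rewrite oppr_eq0 => /eqP ->.
    by rewrite ltxx !andbF; case: ifP.
  by case: ifP.
rewrite -addbA crosses_near_parity // orbF /=.
by case: c; case: (in_sector A B d); case: (in_sector A B (1, 0)).
Qed.

End Sectors.

Section Polygons.
Variable R : rcfType.
Implicit Types (u a b p q d : pt R) (V P : seq (pt R)).

Definition generic_dir d : Prop := [/\ d.2 != 0, d.2 != s3 R * d.1 & d.2 != - (s3 R * d.1)].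

Definition general_position V : Prop :=
  (forall a b c, a \in V -> b \in V -> c \in V ->
     a != b -> b != c -> a != c -> ~ collinear a b c) /\
  (forall a b, a \in V -> b \in V -> a != b -> generic_dir (psub b a)).

Lemma setting_general_position V S : setting V S -> general_position V.
Proof. by case=> _ _ _ _ [Hcol Hdir]; split=> // a b ha hb hab; case: (Hdir a b ha hb hab). Qed.

Lemma general_position_dy V p q : general_position V -> p \in V -> q \in V -> p != q ->
  q.2 - p.2 != 0.
Proof. by case=> _ H hp hq hpq; case: (H p q hp hq hpq). Qed.

Lemma general_position_cross V p q c : general_position V -> p \in V -> q \in V -> c \in V ->
  p != q -> q != c -> p != c -> cross (psub q p) (psub c p) != 0.
Proof. by case=> H _ hp hq hc h1 h2 h3; apply/eqP; apply: (H p q c). Qed.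

Lemma on_seg_sym p q z : on_seg p q z -> on_seg q p z.
Proof.
case=> t [/andP[t0 t1] ->]; exists (1 - t); split; first by apply/andP; split; lra.
by rewrite /padd /pscale /psub /=; congr (_, _); ring.
Qed.

Lemma ltr_div_cross (A d : pt R) : A.2 != 0 ->
  (d.1 < d.2 * A.1 / A.2) = (if 0 < A.2 then 0 < cross A d else cross A d < 0).
Proof.
rewrite /cross; case: (ltrgtP 0 A.2) => // h _.
- by rewrite ltr_pdivlMr // subr_gt0; congr (_ < _); ring.
- by rewrite ltr_ndivlMr // subr_lt0; congr (_ < _); ring.
Qed.

Lemma far_edge_for_small V u p q d : general_position V -> u \in V -> p \in V -> q \in V ->
  p != q -> p != u -> q != u ->
  for_small (fun r => ray_crosses (padd u (pscale r d)) (p, q) = ray_crosses u (p, q) /\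
                      ~ on_seg p q (padd u (pscale r d))).
Proof.
move=> G hu hp hq hpq hpu hqu.
have hp2 : p.2 - u.2 != 0 by apply: (general_position_dy G); rewrite // eq_sym.
have hq2 : q.2 - u.2 != 0 by apply: (general_position_dy G); rewrite // eq_sym.
have hpq2 : q.2 - p.2 != 0 by apply: (general_position_dy G).
have hcol : cross (psub q p) (psub u p) != 0.
  by apply: (general_position_cross G) => //; rewrite eq_sym.
set gap := p.1 + (u.2 - p.2) * (q.1 - p.1) / (q.2 - p.2) - u.1.
have hgap : gap != 0.
  have : gap * (q.2 - p.2) = cross (psub q p) (psub u p) by rewrite /gap /cross /=; field.
  by move=> e; move: hcol; rewrite -e mulf_eq0 negb_or => /andP[].
have e1 := @for_small_gt0 R (fun r => p.2 - (u.2 + r * d.2)) (p.2 - u.2) (- d.2)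
             (fun r => ltac:(ring)) hp2.
have e2 := @for_small_gt0 R (fun r => q.2 - (u.2 + r * d.2)) (q.2 - u.2) (- d.2)
             (fun r => ltac:(ring)) hq2.
have e3 := @for_small_gt0 R
  (fun r => p.1 + (u.2 + r * d.2 - p.2) * (q.1 - p.1) / (q.2 - p.2) - (u.1 + r * d.1))
  gap (d.2 * (q.1 - p.1) / (q.2 - p.2) - d.1) (fun r => ltac:(rewrite /gap; ring)) hgap.
have e4 := @for_small_neq0 R (fun r => cross (psub q p) (psub (padd u (pscale r d)) p))
  (cross (psub q p) (psub u p)) (cross (psub q p) d) (fun r => ltac:(rewrite /cross /=; ring))
  hcol.
apply: (for_small_mono (for_small_and (for_small_and e1 e2) (for_small_and e3 e4))).
move=> r r0 [[h1 h2] [h3 h4]]; split.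
- rewrite /ray_crosses /= -[_ < p.2]subr_gt0 -[_ < q.2]subr_gt0 -[_ < _ + _ / _]subr_gt0.
  by rewrite h1 h2 h3 -[u.2 < p.2]subr_gt0 -[u.2 < q.2]subr_gt0 -[u.1 < _]subr_gt0.
- by case=> t [_ e]; move/eqP: h4; apply; rewrite e /cross /=; ring.
Qed.

Lemma below_shift u d r : 0 < r -> ((u.2 + r * d.2) < u.2) = (d.2 < 0).
Proof. by move=> r0; rewrite -subr_lt0 addrAC subrr add0r pmulr_rlt0. Qed.

Lemma ray_crosses_near_l u a d : (psub a u).2 != 0 ->
  for_small (fun r => ray_crosses (padd u (pscale r d)) (u, a) = crosses_near (psub a u) d).
Proof.
move=> hA.
have e1 := @for_small_gt0 R (fun r => a.2 - (u.2 + r * d.2)) (a.2 - u.2) (- d.2)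
             (fun r => ltac:(ring)) hA.
apply: (for_small_mono e1) => r r0 h1.
rewrite /ray_crosses /crosses_near /= below_shift // -[_ < a.2]subr_gt0 h1.
congr (_ && _).
have -> : u.1 + (u.2 + r * d.2 - u.2) * (a.1 - u.1) / (a.2 - u.2) =
  u.1 + r * (d.2 * (a.1 - u.1) / (a.2 - u.2)) by ring.
by rewrite ltrD2l ltr_pM2l // (ltr_div_cross d hA).
Qed.

Lemma ray_crosses_near_r u b d : (psub b u).2 != 0 ->
  for_small (fun r => ray_crosses (padd u (pscale r d)) (b, u) = crosses_near (psub b u) d).
Proof.
move=> hB.
have e1 := @for_small_gt0 R (fun r => b.2 - (u.2 + r * d.2)) (b.2 - u.2) (- d.2)
             (fun r => ltac:(ring)) hB.
apply: (for_small_mono e1) => r r0 h1.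
rewrite /ray_crosses /crosses_near /= below_shift // -[_ < b.2]subr_gt0 h1 eq_sym.
congr (_ && _).
have hB' : u.2 - b.2 != 0 by rewrite -oppr_eq0 opprB.
have -> : b.1 + (u.2 + r * d.2 - b.2) * (u.1 - b.1) / (u.2 - b.2) =
          u.1 + r * (d.2 * (b.1 - u.1) / (b.2 - u.2)) by field; rewrite hB hB'.
by rewrite ltrD2l ltr_pM2l // (ltr_div_cross d hB).
Qed.

Lemma collinear_scale (A d : pt R) : cross A d = 0 -> pscale (dot A A) d = pscale (dot A d) A.
Proof.
case: A d => a1 a2 [d1 d2]; rewrite /cross /dot /pscale /= => h.
congr (_, _); apply/eqP; rewrite -subr_eq0; apply/eqP.
- by transitivity (a2 * - (a1 * d2 - a2 * d1)); [ring | rewrite h oppr0 mulr0].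
- by transitivity (a1 * (a1 * d2 - a2 * d1)); [ring | rewrite h mulr0].
Qed.

Lemma on_seg_for_small u a d : (psub a u).2 != 0 ->
  for_small (fun r => on_seg u a (padd u (pscale r d)) <-> on_ray (psub a u) d).
Proof.
move=> hA; set A := psub a u.
have hAA : 0 < dot A A.
  have : 0 < A.2 ^+ 2 by rewrite exprn_even_gt0.
  by rewrite /dot; nra.
have [hR|hR] := boolP (on_ray A d); last first.
  apply: for_smallT => r r0; split => // -[t [/andP[t0 t1] [e1 e2]]].
  have {}e1 : r * d.1 = t * A.1 by rewrite /A /=; lra.
  have {}e2 : r * d.2 = t * A.2 by rewrite /A /=; lra.
  move: hR; rewrite /on_ray.
  have -> : cross A d = 0.
    apply: (mulfI (lt0r_neq0 r0)); rewrite mulr0 /cross.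
    by transitivity (A.1 * (r * d.2) - A.2 * (r * d.1)); [ring | rewrite e1 e2; ring].
  suff : 0 <= r * dot A d by rewrite pmulr_rge0 // eqxx => ->.
  have -> : r * dot A d = A.1 * (r * d.1) + A.2 * (r * d.2) by rewrite /dot; ring.
  by rewrite e1 e2; nra.
case/andP: hR => /eqP hc hd.
have hdl : d = pscale (dot A d / dot A A) A.
  move: (collinear_scale hc); rewrite /pscale; case: d {hc hd} => d1 d2 /= [h1 h2].
  by congr (_, _); [rewrite mulrAC -h1 | rewrite mulrAC -h2];
    rewrite [dot A A * _]mulrC mulfK // gt_eqF.
set l := dot A d / dot A A.
have hl : 0 <= l by rewrite /l divr_ge0 // ltW.
exists (1 / (l + 1)); first by rewrite divr_gt0 // ltr_wpDl.
move=> r r0; rewrite ler_pdivlMr ?ltr_wpDl // => hr; split => // _.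
exists (r * l); split; first by apply/andP; split; [rewrite mulr_ge0 // ltW | nra].
by rewrite hdl /l /padd /pscale /A /=; congr (_, _); ring.
Qed.

Lemma pedges_corner u a t b :
  pedges (u :: a :: rcons t b) = (u, a) :: rcons (zip (a :: t) (rcons t b)) (b, u).
Proof. by rewrite /pedges rot1_cons /= -rcons_cons zip_rcons // /= size_rcons. Qed.

Lemma zip_rcons_edges (T : eqType) (l : seq T) x y e :
  uniq (x :: rcons l y) -> e \in zip (x :: l) (rcons l y) ->
  [/\ e.1 != e.2, e.1 \in x :: rcons l y & e.2 \in x :: rcons l y].
Proof.
elim: l x => [|h l IH] x /=.
  move=> /andP[hx _]; rewrite mem_seq1 => /eqP -> /=.
  by split; rewrite ?inE ?eqxx ?orbT //; move: hx; rewrite mem_seq1.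
move=> /andP[hx hu]; rewrite inE => /orP[/eqP -> /=|he].
  by split; rewrite ?inE ?eqxx ?orbT //; move: hx; rewrite inE negb_or => /andP[].
by have [h1 h2 h3] := IH h hu he; split=> //; apply/orP; right; [exact: h2 | exact: h3].
Qed.

Lemma take_zip (S T : Type) (s : seq S) (t : seq T) n :
  take n (zip s t) = zip (take n s) (take n t).
Proof. by elim: s t n => [|x s IH] [|y t] [|n] //=; rewrite IH. Qed.

Lemma drop_zip (S T : Type) (s : seq S) (t : seq T) n :
  drop n (zip s t) = zip (drop n s) (drop n t).
Proof.
by elim: s t n => [|x s IH] [|y t] [|n] //=; try exact: IH; case: (drop _ _).
Qed.

Lemma pedges_rot P n : pedges (rot n P) = rot n (pedges P).
Proof.
by rewrite /pedges rot_rot /rot drop_zip take_zip zip_cat // !size_drop size_rot.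
Qed.

Lemma poly_interior_rot P n z : poly_interior (rot n P) z <-> poly_interior P z.
Proof.
have cnt : count (ray_crosses z) (pedges (rot n P)) = count (ray_crosses z) (pedges P).
  by rewrite pedges_rot; apply/permP; rewrite perm_rot.
rewrite /poly_interior /on_boundary cnt pedges_rot.
by split=> -[h1 h2]; split=> // -[e he hs]; apply: h1; exists e; rewrite ?mem_rot in he *.
Qed.

Lemma middle_edges_for_small V u a t b d : general_position V ->
  uniq (u :: a :: rcons t b) -> {subset u :: a :: rcons t b <= V} ->
  for_small (fun r => forall e, e \in zip (a :: t) (rcons t b) ->
    ray_crosses (padd u (pscale r d)) e = ray_crosses u e /\
    ~ on_seg e.1 e.2 (padd u (pscale r d))).
Proof.
move=> G /andP[hun hU] hV; have hu : u \in V by apply: hV; rewrite mem_head.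
apply: for_small_all => -[p q] he.
have [/= hpq hp hq] := zip_rcons_edges hU he.
have hpu : p != u by rewrite eq_sym; apply: contraNneq hun => ->.
have hqu : q != u by rewrite eq_sym; apply: contraNneq hun => ->.
by apply: (far_edge_for_small d G hu) => //; apply: hV; rewrite in_cons ?hp ?hq orbT.
Qed.

Lemma interior_near_corner V u a t b d : general_position V -> uniq (u :: a :: rcons t b) ->
  {subset u :: a :: rcons t b <= V} ->
  for_small (fun r => poly_interior (u :: a :: rcons t b) (padd u (pscale r d)) <->
    ~~ (on_ray (psub a u) d || on_ray (psub b u) d) &&
    (odd (count (ray_crosses u) (zip (a :: t) (rcons t b)))
       (+) crosses_near (psub a u) d (+) crosses_near (psub b u) d)).
Proof.
move=> G hU hV.
have hu : u \in V by apply: hV; rewrite mem_head.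
have ha : a \in V by apply: hV; rewrite !inE eqxx orbT.
have hb : b \in V by apply: hV; rewrite !inE mem_rcons mem_head !orbT.
move: (hU) => /= /andP[hun _].
have hua : u != a by apply: contraNneq hun => ->; rewrite mem_head.
have hub : u != b by apply: contraNneq hun => ->; rewrite in_cons mem_rcons mem_head orbT.
have hA : (psub a u).2 != 0 by exact: (general_position_dy G hu ha hua).
have hB : (psub b u).2 != 0 by exact: (general_position_dy G hu hb hub).
have near := for_small_and (for_small_and (ray_crosses_near_l d hA) (ray_crosses_near_r d hB))
                           (for_small_and (on_seg_for_small d hA) (on_seg_for_small d hB)).
apply: (for_small_mono (for_small_and (middle_edges_for_small d G hU hV) near)).
move=> r r0 [hf [[ea eb] [sa sb]]]; set z := padd u (pscale r d).
have hbd : on_boundary (u :: a :: rcons t b) z <-> on_ray (psub a u) d || on_ray (psub b u) d.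
  rewrite /on_boundary pedges_corner; split.
  - case=> e; rewrite in_cons -cats1 mem_cat mem_seq1 => /orP[/eqP -> /= /sa -> //|].
    case/orP => [he hs|/eqP -> /= /on_seg_sym /sb ->]; last by rewrite orbT.
    by case: (hf e he).
  - case/orP => [/sa hs|/sb /on_seg_sym hs]; first by exists (u, a); rewrite ?mem_head.
    by exists (b, u); rewrite // in_cons mem_rcons mem_head orbT.
have hcnt : count (ray_crosses z) (pedges (u :: a :: rcons t b)) =
    (crosses_near (psub a u) d + count (ray_crosses u) (zip (a :: t) (rcons t b)) +
     crosses_near (psub b u) d)%N.
  rewrite pedges_corner /= -cats1 count_cat /= ea eb addn0 addnA.
  by congr (_ + _ + _)%N; apply: eq_in_count => e he; exact: (hf e he).1.
rewrite /poly_interior hcnt !oddD !oddb [_ (+) odd _]addbC.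
split=> [[h1 ->]|/andP[h1 ->]]; last by split=> // /hbd; apply/negP.
by rewrite andbT; apply/negP => /hbd.
Qed.

Definition in_wedge (F1 F2 : pt R) (conv : bool) (d : pt R) : Prop :=
  if conv then 0 < dot F1 d /\ 0 < dot F2 d else ~ (0 <= dot F1 d /\ 0 <= dot F2 d).

Lemma sector_as_wedge (A B : pt R) (conv : bool) : exists F1 F2, forall d,
  in_wedge F1 F2 conv d <-> if conv then in_sector A B d else ~~ in_closed_sector A B d.
Proof.
pose sg : R := if 0 < cross A B then 1 else -1.
exists (sg * - A.2, sg * A.1), (sg * B.2, sg * - B.1) => d; rewrite /in_wedge.
have -> : dot (sg * - A.2, sg * A.1) d = sg * cross A d by rewrite /dot /cross /=; ring.
have -> : dot (sg * B.2, sg * - B.1) d = sg * cross d B by rewrite /dot /cross /=; ring.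
rewrite /in_sector /in_closed_sector /sg.
case: (0 < cross A B); rewrite ?mul1r ?mulN1r ?oppr_gt0 ?oppr_ge0; case: conv.
all: by split=> [[-> ->] | /andP] || by split=> [h | /negP h [h1 h2]];
  [apply/negP => /andP | apply: h; rewrite h1 h2].
Qed.

Lemma corner_wedge V P u : general_position V -> uniq P -> (3 <= size P)%N ->
  {subset P <= V} -> u \in P -> exists F1 F2 conv, forall d,
  for_small (fun r => poly_interior P (padd u (pscale r d))) <-> in_wedge F1 F2 conv d.
Proof.
move=> G hU hs hV hu.
suff [F1 [F2 [conv H]]] : exists F1 F2 conv, forall d,
    for_small (fun r => poly_interior (rot (index u P) P) (padd u (pscale r d))) <->
    in_wedge F1 F2 conv d.
  exists F1, F2, conv => d; rewrite -H.
  by split=> /for_small_mono; apply=> r _ /poly_interior_rot.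
have hU' : uniq (rot (index u P) P) by rewrite rot_uniq.
have hV' : {subset rot (index u P) P <= V} by move=> x; rewrite mem_rot; apply: hV.
have hs' : (3 <= size (rot (index u P) P))%N by rewrite size_rot.
move: hU' hV' hs'; rewrite (rot_index hu); set s := (drop _ _ ++ _).
case: s => [|a l] //; case/lastP: l => [|t b] // hU' hV' _.
have hu' : u \in V by apply: hV'; rewrite mem_head.
have ha : a \in V by apply: hV'; rewrite !inE eqxx orbT.
have hb : b \in V by apply: hV'; rewrite !inE mem_rcons mem_head !orbT.
move: (hU') => /= /andP[hun /andP[han _]].
have hua : u != a by apply: contraNneq hun => ->; rewrite mem_head.
have hub : u != b by apply: contraNneq hun => ->; rewrite in_cons mem_rcons mem_head orbT.
have hab : a != b by apply: contraNneq han => ->; rewrite mem_rcons mem_head.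
have hA : (psub a u).2 != 0 by exact: (general_position_dy G hu' ha hua).
have hB : (psub b u).2 != 0 by exact: (general_position_dy G hu' hb hub).
have hAB : cross (psub a u) (psub b u) != 0.
  exact: (general_position_cross G hu' ha hb hua hab hub).
set c := odd (count (ray_crosses u) (zip (a :: t) (rcons t b))).
pose conv := ~~ (c (+) in_sector (psub a u) (psub b u) (1, 0)).
have [F1 [F2 HW]] := sector_as_wedge (psub a u) (psub b u) conv.
exists F1, F2, conv => d.
by rewrite (for_small_iff (interior_near_corner d G hU' hV')) HW crossing_parity_sector.
Qed.

End Polygons.

Section Cones.
Variable R : rcfType.
Implicit Types (d x y : pt R).

Lemma s3_sqr : s3 R ^+ 2 = 3.
Proof. by rewrite /s3 sqr_sqrtr // ler0n. Qed.

(* [cone_ray k] points at angle [60 (k + 1)] degrees, so that cone [k] lies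
   between [cone_ray k] and [cone_ray k.+1] (for [k < 6]). *)
Definition cone_ray (k : nat) : pt R :=
  match k with
  | 0 => (1, s3 R) | 1 => (-1, s3 R) | 2 => (-2, 0) | 3 => (-1, - s3 R) | 4 => (1, - s3 R)
  | 5 => (2, 0) | _ => (1, s3 R)
  end.

Definition in_open_cone (k : nat) d : Prop :=
  0 < cross (cone_ray k) d /\ 0 < cross d (cone_ray k.+1).

Lemma cone_ray_cross_neq0 j d : generic_dir d -> cross (cone_ray j) d != 0.
Proof.
case: d => d1 d2 [/= n1 n2 n3]; rewrite /cross.
by case: j => [|[|[|[|[|[|j]]]]]] /=;
  [move: n2|move: n3|move: n1|move: n2|move: n3|move: n1|move: n2];
  apply: contraNneq => h; apply/eqP; lra.
Qed.

Lemma cone_cross_sum k d : (k < 6)%N ->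
  cross (cone_ray k) d + cross d (cone_ray k.+1) = 2 * dot d (bisector R k).
Proof. by rewrite /cross /dot; case: k => [|[|[|[|[|[|k]]]]]] //= _; field. Qed.

Lemma cone_cross_prod k d : (k < 6)%N ->
  cross (cone_ray k) d * cross d (cone_ray k.+1) = 4 * dot d (bisector R k) ^+ 2 - 3 * dot d d.
Proof.
have h := s3_sqr; rewrite /cross /dot.
by case: k => [|[|[|[|[|[|k]]]]]] //= _; field: h.
Qed.

Lemma in_cone_open k d : (k < 6)%N -> generic_dir d -> in_cone k d <-> in_open_cone k d.
Proof.
move=> hk g; rewrite /in_cone /in_open_cone.
have := cone_cross_sum d hk; have := cone_cross_prod d hk.
have := cone_ray_cross_neq0 k g; have := cone_ray_cross_neq0 k.+1 g.
rewrite [cross (cone_ray k.+1) d]crossC oppr_eq0.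
move: (cross (cone_ray k) d) (cross d (cone_ray k.+1)) => a b nb na ep es.
split=> [/andP[h1 h2] | [ha hb]]; last by apply/andP; split; nra.
have hab : 0 <= a * b by lra.
by case: (ltrgtP 0 a) na => // ha _; case: (ltrgtP 0 b) nb => // hb _; split; nra.
Qed.

Lemma dot_bisector_neq0 k d : generic_dir d -> dot d (bisector R k) != 0.
Proof.
move=> g; have n := fun j => cone_ray_cross_neq0 j g.
case: k => [|[|[|[|[|k]]]]]; [move: (n 5%N)|move: (n 0%N)|move: (n 1%N)|move: (n 2%N)|
  move: (n 3%N)|move: (n 4%N)]; apply: contra_neq;
  rewrite /cross /dot /= => h; lra.
Qed.

Lemma cone_ray_relations d :
  [/\ cross (cone_ray 1) d = cross (cone_ray 0) d + cross (cone_ray 2) d,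
      cross (cone_ray 3) d = - cross (cone_ray 0) d,
      cross (cone_ray 4) d = - cross (cone_ray 1) d,
      cross (cone_ray 5) d = - cross (cone_ray 2) d &
      cross (cone_ray 6) d = cross (cone_ray 0) d].
Proof. by split; rewrite /cross /=; ring. Qed.

Lemma in_open_coneE k d :
  in_open_cone k d <-> 0 < cross (cone_ray k) d /\ cross (cone_ray k.+1) d < 0.
Proof. by rewrite /in_open_cone [cross d _]crossC oppr_gt0. Qed.

Lemma open_cone_exists d : generic_dir d -> exists2 k, (k < 6)%N & in_open_cone k d.
Proof.
move=> g; have [_ r3 r4 r5 r6] := cone_ray_relations d.
have := cone_ray_cross_neq0 2 g; have := cone_ray_cross_neq0 1 g.
have := cone_ray_cross_neq0 0 g.
case: (ltrgtP 0 (cross (cone_ray 0) d)) => // h0 _;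
case: (ltrgtP 0 (cross (cone_ray 1) d)) => // h1 _;
case: (ltrgtP 0 (cross (cone_ray 2) d)) => // h2 _.
all: first [ by exists 0%N => //; apply/in_open_coneE; split; lra
           | by exists 1%N => //; apply/in_open_coneE; split; lra
           | by exists 2%N => //; apply/in_open_coneE; split; lra
           | by exists 3%N => //; apply/in_open_coneE; split; lra
           | by exists 4%N => //; apply/in_open_coneE; split; lra
           | by exists 5%N => //; apply/in_open_coneE; split; lra ].
Qed.

Lemma open_cone_uniq k k' d : (k < 6)%N -> (k' < 6)%N ->
  in_open_cone k d -> in_open_cone k' d -> k = k'.
Proof.
have [r1 r3 r4 r5 r6] := cone_ray_relations d.
move=> + + /in_open_coneE + /in_open_coneE.
by case: k => [|[|[|[|[|[|k]]]]]] //; case: k' => [|[|[|[|[|[|k']]]]]] // _ _ [? ?] [? ?];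
  first [reflexivity | exfalso; lra].
Qed.

Lemma open_cone_opp k k' d : (k < 6)%N -> (k' < 6)%N ->
  in_open_cone k d -> in_open_cone k' (- d.1, - d.2) -> positive_cone k' = ~~ positive_cone k.
Proof.
have crossN j : cross (cone_ray j) (- d.1, - d.2) = - cross (cone_ray j) d.
  by rewrite /cross /=; ring.
have [r1 r3 r4 r5 r6] := cone_ray_relations d.
move=> + + /in_open_coneE + /in_open_coneE; rewrite !crossN oppr_gt0 oppr_lt0.
by case: k => [|[|[|[|[|[|k]]]]]] //; case: k' => [|[|[|[|[|[|k']]]]]] // _ _ [? ?] [? ?];
  first [reflexivity | exfalso; lra].
Qed.

Definition comb (s t : R) x y : pt R := padd (pscale s x) (pscale t y).

Lemma dot_comb F s t x y : dot F (comb s t x y) = s * dot F x + t * dot F y.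
Proof. by rewrite /dot /=; ring. Qed.

Lemma cross_comb F s t x y : cross F (comb s t x y) = s * cross F x + t * cross F y.
Proof. by rewrite /cross /=; ring. Qed.

Lemma comb_gt0 (s t a b : R) : 0 <= s -> 0 <= t -> 0 < s + t -> 0 < a -> 0 < b ->
  0 < s * a + t * b.
Proof.
move=> hs ht hst ha hb; case: (ltrgtP 0 s) hs => // h _; first by nra.
by rewrite -h mul0r add0r; rewrite -h add0r in hst; nra.
Qed.

Lemma open_cone_comb k s t x y : in_open_cone k x -> in_open_cone k y ->
  0 <= s -> 0 <= t -> 0 < s + t -> in_open_cone k (comb s t x y).
Proof.
move=> /in_open_coneE[a1 a2] /in_open_coneE[b1 b2] hs ht hst; apply/in_open_coneE.
rewrite !cross_comb; split; first exact: comb_gt0.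
by rewrite -oppr_gt0 opprD -!mulrN; apply: comb_gt0; rewrite ?oppr_gt0.
Qed.

Lemma cone_idx_spec u v : generic_dir (psub v u) ->
  (cone_idx u v < 6)%N /\ in_open_cone (cone_idx u v) (psub v u).
Proof.
move=> g; have [k hk hL] := open_cone_exists g.
have hh : has (fun k => in_cone k (psub v u)) (iota 0 6).
  by apply/hasP; exists k; rewrite ?mem_iota //; apply/in_cone_open.
have hlt : (cone_idx u v < 6)%N by rewrite /cone_idx -{2}(size_iota 0 6) -has_find.
split=> //; apply/in_cone_open => //.
by have := nth_find 0 hh; rewrite nth_iota.
Qed.

End Cones.

Section Wedges.
Variable R : rcfType.
Variables F1 F2 : pt R.
Implicit Types (x y p : pt R) (s t a b : R).

Lemma not_in_reflex_wedge x : ~ in_wedge F1 F2 false x <-> 0 <= dot F1 x /\ 0 <= dot F2 x.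
Proof. by split=> [/NNPP | h]; last by apply. Qed.

Lemma not_in_convex_wedge x : ~ in_wedge F1 F2 true x <-> dot F1 x <= 0 \/ dot F2 x <= 0.
Proof.
rewrite /in_wedge; split=> [h|]; last by case=> h [h1 h2]; lra.
by case: (lerP (dot F1 x) 0) => [|h1]; [left | right; rewrite leNgt; apply/negP => h2; apply: h].
Qed.

Lemma not_in_reflex_wedge_comb x y s t : ~ in_wedge F1 F2 false x -> ~ in_wedge F1 F2 false y ->
  0 <= s -> 0 <= t -> ~ in_wedge F1 F2 false (comb s t x y).
Proof.
move=> /not_in_reflex_wedge[x1 x2] /not_in_reflex_wedge[y1 y2] hs ht.
by apply/not_in_reflex_wedge; rewrite !dot_comb; split; nra.
Qed.

Lemma not_in_wedge_comb conv x y s t : ~ in_wedge F1 F2 conv x -> ~ in_wedge F1 F2 conv y ->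
  (dot F1 x <= 0) = (dot F1 y <= 0) -> 0 <= s -> 0 <= t -> ~ in_wedge F1 F2 conv (comb s t x y).
Proof.
case: conv; last by move=> hx hy _; apply: not_in_reflex_wedge_comb.
move=> /not_in_convex_wedge hx /not_in_convex_wedge hy e hs ht; apply/not_in_convex_wedge.
rewrite !dot_comb; case: (lerP (dot F1 x) 0) => x1.
  have y1 : dot F1 y <= 0 by rewrite -e.
  by left; nra.
have y1 : 0 < dot F1 y by rewrite ltNge -e -ltNge.
have x2 : dot F2 x <= 0 by case: hx => // h; lra.
have y2 : dot F2 y <= 0 by case: hy => // h; lra.
by right; nra.
Qed.

(* The determinant [m12 m21 - m11 m22] is positive; the two positive
   combinations then force [a, b > 0] by Cramer's rule. *)
Lemma pos_combs_coef_ge0 (m11 m12 m21 m22 s t a b : R) :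
  (m11 <= 0 \/ m21 <= 0) -> (m12 <= 0 \/ m22 <= 0) -> 0 <= s -> 0 <= t ->
  0 < s * m11 + t * m12 -> 0 < s * m21 + t * m22 ->
  0 < a * m11 + b * m12 -> 0 < a * m21 + b * m22 -> 0 <= a /\ 0 <= b.
Proof.
wlog h1 : m11 m12 m21 m22 / m11 <= 0.
  move=> W [h|h] h2 hs ht e1 e2 e3 e4; first by apply: (W m11 m12 m21 m22); tauto.
  by apply: (W m21 m22 m11 m12); tauto.
move=> _ h2 hs ht e1 e2 e3 e4.
have [t0 m12p] : 0 < t /\ 0 < m12.
  by split; rewrite ltNge; apply/negP => h; [have : t = 0 by lra | ]; nra.
have m22n : m22 <= 0 by case: h2 => // h; lra.
have [s0 m21p] : 0 < s /\ 0 < m21.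
  by split; rewrite ltNge; apply/negP => h; [have : s = 0 by lra | ]; nra.
have D : 0 < m12 * m21 - m11 * m22 by nra.
by split; apply: ltW; nra.
Qed.

Lemma convex_wedge_comb_coef_ge0 x y s t a b :
  ~ in_wedge F1 F2 true x -> ~ in_wedge F1 F2 true y -> 0 <= s -> 0 <= t ->
  in_wedge F1 F2 true (comb s t x y) -> in_wedge F1 F2 true (comb a b x y) -> 0 <= a /\ 0 <= b.
Proof.
move=> /not_in_convex_wedge hx /not_in_convex_wedge hy hs ht.
rewrite /in_wedge !dot_comb => -[e1 e2] [e3 e4].
exact: (pos_combs_coef_ge0 hx hy hs ht e1 e2 e3 e4).
Qed.

Lemma comb_cramer x y p : cross x y != 0 ->
  p = comb (cross p y / cross x y) (cross x p / cross x y) x y.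
Proof.
by case: x y p => x1 x2 [y1 y2] [p1 p2]; rewrite /cross /comb /padd /pscale /= => h;
  congr (_, _); field.
Qed.

Lemma comb_coef_sum_gt0 s t (X Y : R) : 0 <= s -> 0 <= t -> 0 < s * X + t * Y -> 0 < s + t.
Proof.
move=> hs ht h; rewrite ltNge; apply/negP => hst.
have [s0 t0] : s = 0 /\ t = 0 by split; lra.
by move: h; rewrite s0 t0 !mul0r addr0 ltxx.
Qed.

(* A convex wedge that contains a combination of two directions outside it
   lies inside the sector they span, hence in their common open cone. *)
Lemma wedge_in_one_cone conv k k' x1 x2 x3 x4 s t s' t' :
  (k < 6)%N -> (k' < 6)%N ->
  in_open_cone k x1 -> in_open_cone k x2 -> in_open_cone k' x3 -> in_open_cone k' x4 ->
  ~ in_wedge F1 F2 conv x1 -> ~ in_wedge F1 F2 conv x2 ->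
  ~ in_wedge F1 F2 conv x3 -> ~ in_wedge F1 F2 conv x4 -> cross x3 x4 != 0 ->
  0 <= s -> 0 <= t -> 0 <= s' -> 0 <= t' ->
  in_wedge F1 F2 conv (comb s t x1 x2) -> in_wedge F1 F2 conv (comb s' t' x3 x4) -> k = k'.
Proof.
move=> hk hk' c1 c2 c3 c4 w1 w2 w3 w4 hc hs ht hs' ht' W12 W34.
case: conv w1 w2 w3 w4 W12 W34 => w1 w2 w3 w4 W12 W34; last first.
  by case: (not_in_reflex_wedge_comb w1 w2 hs ht).
set p := comb s t x1 x2.
have [f1p _] := W12.
have hp : in_open_cone k p.
  apply: open_cone_comb => //; apply: (comb_coef_sum_gt0 hs ht (X := dot F1 x1) (Y := dot F1 x2)).
  by rewrite -dot_comb.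
move: (W12); rewrite [p in in_wedge _ _ _ p](comb_cramer p hc) => W12'.
have [ha hb] := convex_wedge_comb_coef_ge0 w3 w4 hs' ht' W34 W12'.
apply: (open_cone_uniq hk hk' hp); rewrite (comb_cramer p hc).
apply: open_cone_comb => //; apply: (comb_coef_sum_gt0 ha hb (X := dot F1 x3) (Y := dot F1 x4)).
by rewrite -dot_comb -comb_cramer.
Qed.

End Wedges.

Lemma size_le_slots (T : eqType) (n : nat) (X : seq T) (P : nat -> T -> Prop) :
  uniq X -> (forall x, x \in X -> exists2 i, (i < n)%N & P i x) ->
  (forall i x y, x \in X -> y \in X -> P i x -> P i y -> x = y) -> (size X <= n)%N.
Proof.
elim: n X => [|n IH] X hU hS hI.
  by case: X hU hS hI => [|x X] // _ hS _; have [] := hS x (mem_head _ _).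
case: (classic (exists2 x0, x0 \in X & P n x0)) => [[x0 hx0 hP]|hN].
- have -> : size X = (size (rem x0 X)).+1 by rewrite size_rem // prednK //; case: (X) hx0.
  rewrite ltnS; apply: IH; first exact: rem_uniq.
  + move=> x; rewrite (mem_rem_uniq _ hU) inE => /andP[hx hxX].
    have [i hi hPi] := hS x hxX; exists i => //.
    rewrite ltn_neqAle -ltnS hi andbT; apply: contraNneq hx => ei; subst i.
    by apply/eqP; apply: (hI n x x0).
  + by move=> i x y; rewrite !(mem_rem_uniq _ hU) !inE => /andP[_ hx] /andP[_ hy]; apply: hI.
- apply: leq_trans (IH X hU _ _) _ => //.
  move=> x hx; have [i hi hPi] := hS x hx; exists i => //.
  rewrite ltn_neqAle -ltnS hi andbT; apply/eqP => ei; subst i.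
  by apply: hN; exists x.
Qed.

Lemma size_sum_filter (T : eqType) (n : nat) (f : T -> nat) (s : seq T) :
  {in s, forall x, f x < n}%N -> size s = (\sum_(k < n) size [seq x <- s | f x == k])%N.
Proof.
elim: s => [|x s IH] hs; first by rewrite big1.
have hx : (f x < n)%N by apply: hs; rewrite mem_head.
rewrite /= IH => [|y ys]; last by apply: hs; rewrite inE ys orbT.
transitivity (\sum_(k < n) (nat_of_bool (f x == k) + size [seq y <- s | f y == k]))%N.
  rewrite big_split /= -add1n; congr (_ + _)%N.
  rewrite (bigD1 (Ordinal hx)) //= eqxx big1 // => k.
  by rewrite -val_eqE /= eq_sym => /negbTE ->.
by apply: eq_bigr => k _; case: (f x == k).
Qed.

Section Visibility.
Variable R : rcfType.
Implicit Types (u v w p q : pt R) (S : seq (seq (pt R))).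

Lemma visible_sym S p q : visible S p q -> visible S q p.
Proof.
move=> H O hO t /andP[t0 t1]; have ht' : 0 <= 1 - t <= 1 by apply/andP; split; lra.
have -> : padd q (pscale t (psub p q)) = padd p (pscale (1 - t) (psub q p)).
  by rewrite /padd /pscale /psub /=; congr (_, _); ring.
exact: H.
Qed.

Lemma corner_obstacle_uniq S (O1 O2 : seq (pt R)) u : uniq (flatten S) ->
  O1 \in S -> O2 \in S -> u \in O1 -> u \in O2 -> O1 = O2.
Proof.
elim: S => [|O S IH] //= /[!cat_uniq] /and3P[_ hd hU].
rewrite !inE => /orP[/eqP->|h1] /orP[/eqP->|h2] hu1 hu2 //; last exact: IH.
- by case/hasP: hd; exists u => //; apply/flattenP; exists O2.
- by case/hasP: hd; exists u => //; apply/flattenP; exists O1.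
Qed.

(* Near [u], the obstacle having [u] as a corner fills a wedge of directions;
   if there is no such obstacle, the wedge is empty. *)
Lemma vertex_wedge V S u : setting V S -> u \in V -> exists F1 F2 conv,
  (forall v, visible S u v -> ~ in_wedge F1 F2 conv (psub v u)) /\
  (forall v w, same_subcone S u v w <->
     cone_idx u v = cone_idx u w /\
     ~ exists s t, [/\ 0 <= s, 0 <= t & in_wedge F1 F2 conv (comb s t (psub v u) (psub w u))]).
Proof.
move=> HS hu; have G := setting_general_position HS.
case: HS => _ hO _ hflat _.
case: (classic (exists2 O, O \in S & u \in O)) => [[O hO0 huO]|hN].
- have [[h3 [hU _]] hsub] := hO O hO0.
  have [F1 [F2 [conv HC]]] := corner_wedge G hU h3 hsub huO.
  exists F1, F2, conv; split.
  + move=> v hvis /HC [eps he H].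
    have r0 : 0 < Num.min eps 1 by rewrite lt_min he ltr01.
    apply: (hvis O hO0 (Num.min eps 1)); last by apply: H; rewrite ?ge_min ?lexx.
    by rewrite ltW //= ge_min lexx orbT.
  + move=> v w; rewrite /same_subcone; split=> -[hc hn]; split=> // -[].
    * move=> s [t [hs ht /HC [eps he H]]]; apply: hn; exists O; split=> //.
      by exists s, t; split=> //; exists eps => // r /andP[]; apply: H.
    * move=> O' [hO' huO' [s [t [hs ht [eps he H]]]]].
      have eO := corner_obstacle_uniq hflat hO' hO0 huO' huO; subst O'.
      apply: hn; exists s, t; split=> //; apply/HC; exists eps => // r r0 re.
      by apply: H; rewrite r0 re.
- have W0 d : ~ in_wedge (0, 0) (0, 0) false d by apply/not_in_reflex_wedge; rewrite /dot /=; lra.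
  exists (0, 0), (0, 0), false; split=> [v _|v w]; first exact: W0.
  rewrite /same_subcone; split=> -[hc hn]; split=> // -[]; first by move=> s [t [_ _ /W0]].
  by move=> O [hO' huO _]; apply: hN; exists O.
Qed.

End Visibility.

Section Degree.
Variables (R : rcfType) (V : seq (pt R)) (S : seq (seq (pt R))) (u : pt R).
Hypotheses (HS : setting V S) (Hu : u \in V).
Implicit Types (v w : pt R) (X nb : seq (pt R)).

Let G := setting_general_position HS.

Lemma Ginf_edge_vertex v : Ginf_edge V S u v -> [/\ v \in V, v != u & visible S u v].
Proof.
case=> -[h1 h2 h3 [h4 _] _]; first by split.
by split=> //; [rewrite eq_sym | apply: visible_sym].
Qed.

Lemma cone_idx_vertex v : v \in V -> v != u ->
  (cone_idx u v < 6)%N /\ in_open_cone (cone_idx u v) (psub v u).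
Proof. by move=> hv hvu; apply: cone_idx_spec; apply: G.2; rewrite // eq_sym. Qed.

Lemma Ginf_edge_positive v : Ginf_edge V S u v -> positive_cone (cone_idx u v) ->
  Ginf_adds V S u v.
Proof.
case=> // -[hv _ huv [_ hpos] _] hpos'; exfalso.
have hvu : v != u by rewrite eq_sym.
have [k1 c1] := cone_idx_vertex hv hvu.
have [k2 c2] : (cone_idx v u < 6)%N /\ in_open_cone (cone_idx v u) (psub u v).
  by apply: cone_idx_spec; apply: G.2.
have opp : psub u v = (- (psub v u).1, - (psub v u).2) by rewrite /psub /=; congr (_, _); ring.
by move: (open_cone_opp k1 k2 c1); rewrite -opp hpos hpos' => /(_ c2).
Qed.

Lemma proj_inj k v w : v \in V -> w \in V -> proj u k v = proj u k w -> v = w.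
Proof.
move=> hv hw e; apply/eqP; apply: contraT => hvw.
have : dot (psub v w) (bisector R k) != 0 by apply/dot_bisector_neq0/G.2; rewrite // eq_sym.
have -> : dot (psub v w) (bisector R k) = proj u k v - proj u k w.
  by rewrite /proj /dot /psub /=; ring.
by rewrite e subrr eqxx.
Qed.

Lemma cross_neighbours_neq0 v w : v \in V -> w \in V -> v != u -> w != u -> v != w ->
  cross (psub v u) (psub w u) != 0.
Proof. by move=> hv hw hvu hwu hvw; apply: (general_position_cross G); rewrite // eq_sym. Qed.

Definition cone_capacity (k : nat) : nat := if positive_cone k then 1 else 3.

Section Subcone.
Variables (k : nat) (X : seq (pt R)).
Hypotheses (uniqX : uniq X) (G15X : {in X, forall v, G15_edge V S u v})
  (coneX : {in X, forall v, cone_idx u v = k})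
  (subconeX : {in X &, forall v w, same_subcone S u v w}).

Lemma positive_subcone_size_le1 : positive_cone k -> (size X <= 1)%N.
Proof.
move=> hpos; apply: (@size_le_slots _ 1 X (fun _ _ => True)) => // [v _|_ v w hv hw _ _].
  by exists 0%N.
have [[hE _ _] [hEw _ _]] := (G15X hv, G15X hw).
have [hvV hvu hvis] := Ginf_edge_vertex hE; have [hwV hwu hwis] := Ginf_edge_vertex hEw.
have [_ _ _ _ closest_v] := Ginf_edge_positive hE (ltac:(by rewrite coneX)).
have [_ _ _ _ closest_w] := Ginf_edge_positive hEw (ltac:(by rewrite coneX)).
have := closest_v w hwV hwu hwis (subconeX hv hw).
have := closest_w v hvV hvu hvis (subconeX hw hv).
rewrite (coneX hv) (coneX hw) => h1 h2.
by apply: (proj_inj (k := k)) => //; apply/eqP; rewrite eq_le h1 h2.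
Qed.

Lemma negative_subcone_size_le3 : ~~ positive_cone k -> (size X <= 3)%N.
Proof.
move=> hneg; pose N v z := Ginf_edge V S u z /\ same_subcone S u v z.
pose P i v := match i with
              | 0 => forall z, N v z -> 0 <= cross (psub v u) (psub z u)
              | 1 => forall z, N v z -> cross (psub v u) (psub z u) <= 0
              | _ => forall z, N v z -> proj u (cone_idx u v) v <= proj u (cone_idx u v) z
              end.
apply: (@size_le_slots _ 3 X P) => // [v hv|i v w hv hw Pv Pw].
  have [_ [hp|[h|h|h]] _] := G15X hv; [by move: hp; rewrite coneX // (negbTE hneg)|
    by exists 0%N|by exists 1%N|by exists 2%N].
apply/eqP; apply: contraT => hvw.
have [[hE _ _] [hEw _ _]] := (G15X hv, G15X hw).
have [hvV hvu _] := Ginf_edge_vertex hE; have [hwV hwu _] := Ginf_edge_vertex hEw.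
have Nvw : N v w by split; last exact: subconeX.
have Nwv : N w v by split; last exact: subconeX.
have col := cross_neighbours_neq0 hvV hwV hvu hwu hvw.
have hcr : cross (psub w u) (psub v u) = - cross (psub v u) (psub w u) by rewrite crossC.
case: i Pv Pw => [|[|i]] /= Pv Pw; have c1 := Pv w Nvw; have c2 := Pw v Nwv.
- have : cross (psub v u) (psub w u) = 0 by rewrite hcr in c2; lra.
  by move/eqP; rewrite (negbTE col).
- have : cross (psub v u) (psub w u) = 0 by rewrite hcr in c2; lra.
  by move/eqP; rewrite (negbTE col).
- rewrite (coneX hv) in c1; rewrite (coneX hw) in c2.
  have : v = w by apply: (proj_inj (k := k)) => //; apply/eqP; rewrite eq_le c1 c2.
  by move/eqP; rewrite (negbTE hvw).
Qed.

Lemma subcone_size_le : (size X <= cone_capacity k)%N.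
Proof.
rewrite /cone_capacity; case: ifP => [|/negbT] h.
  exact: positive_subcone_size_le1.
exact: negative_subcone_size_le3.
Qed.

End Subcone.

Section Wedge.
Variables (F1 F2 : pt R) (conv : bool).
Hypothesis wedge_hidden : forall v, visible S u v -> ~ in_wedge F1 F2 conv (psub v u).
Hypothesis same_subconeE : forall v w, same_subcone S u v w <->
  cone_idx u v = cone_idx u w /\
  ~ exists s t, [/\ 0 <= s, 0 <= t & in_wedge F1 F2 conv (comb s t (psub v u) (psub w u))].

Lemma same_side_same_subcone v w : visible S u v -> visible S u w ->
  cone_idx u v = cone_idx u w -> (dot F1 (psub v u) <= 0) = (dot F1 (psub w u) <= 0) ->
  same_subcone S u v w.
Proof.
move=> hv hw hc hside; apply/same_subconeE; split=> // -[s [t [hs ht]]].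
exact: (not_in_wedge_comb (wedge_hidden hv) (wedge_hidden hw) hside hs ht).
Qed.

Lemma cone_size_le k X : uniq X -> {in X, forall v, G15_edge V S u v} ->
  {in X, forall v, cone_idx u v = k} -> (size X <= 2 * cone_capacity k)%N.
Proof.
move=> hX hG hk; pose side v := dot F1 (psub v u) <= 0.
rewrite -(count_predC side) -!size_filter mul2n -addnn.
have vis v : v \in X -> visible S u v by case/hG => /Ginf_edge_vertex[].
apply: leq_add; apply: subcone_size_le; rewrite ?filter_uniq //.
- by move=> v; rewrite mem_filter => /andP[_ /hG].
- by move=> v; rewrite mem_filter => /andP[_ /hk].
- move=> v w; rewrite !mem_filter => /andP[sv hv] /andP[sw hw].
  apply: same_side_same_subcone; rewrite ?hk //; try exact: vis.
  by move: sv sw; rewrite /side => -> ->.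
- by move=> v; rewrite mem_filter => /andP[_ /hG].
- by move=> v; rewrite mem_filter => /andP[_ /hk].
- move=> v w; rewrite !mem_filter => /andP[/negbTE sv hv] /andP[/negbTE sw hw].
  apply: same_side_same_subcone; rewrite ?hk //; try exact: vis.
  by move: sv sw; rewrite /side => -> ->.
Qed.

Lemma split_subcone_wedge v w : visible S u v -> visible S u w ->
  cone_idx u v = cone_idx u w -> ~ same_subcone S u v w -> v != w /\
  exists s t, [/\ 0 <= s, 0 <= t & in_wedge F1 F2 conv (comb s t (psub v u) (psub w u))].
Proof.
move=> hv hw hc hn; split.
  by apply/eqP => evw; subst w; apply: hn; apply: same_side_same_subcone.
by apply: NNPP => hne; apply: hn; apply/same_subconeE.
Qed.

Lemma split_cone_unique v1 w1 v2 w2 :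
  G15_edge V S u v1 -> G15_edge V S u w1 -> G15_edge V S u v2 -> G15_edge V S u w2 ->
  cone_idx u v1 = cone_idx u w1 -> cone_idx u v2 = cone_idx u w2 ->
  ~ same_subcone S u v1 w1 -> ~ same_subcone S u v2 w2 -> cone_idx u v1 = cone_idx u v2.
Proof.
move=> [/Ginf_edge_vertex[hv1 hv1u vis1] _ _] [/Ginf_edge_vertex[hw1 hw1u wis1] _ _].
move=> [/Ginf_edge_vertex[hv2 hv2u vis2] _ _] [/Ginf_edge_vertex[hw2 hw2u wis2] _ _].
move=> c1 c2 n1 n2.
have [_ [s [t [hs ht W1]]]] := split_subcone_wedge vis1 wis1 c1 n1.
have [neq2 [s' [t' [hs' ht' W2]]]] := split_subcone_wedge vis2 wis2 c2 n2.
have [k1 o1] := cone_idx_vertex hv1 hv1u; have [_ o1'] := cone_idx_vertex hw1 hw1u.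
have [k2 o2] := cone_idx_vertex hv2 hv2u; have [_ o2'] := cone_idx_vertex hw2 hw2u.
rewrite -c1 in o1'; rewrite -c2 in o2'.
apply: (wedge_in_one_cone k1 k2 o1 o1' o2 o2' (wedge_hidden vis1) (wedge_hidden wis1)
  (wedge_hidden vis2) (wedge_hidden wis2) _ hs ht hs' ht' W1 W2).
exact: cross_neighbours_neq0.
Qed.

Lemma one_split_cone nb : {in nb, forall v, G15_edge V S u v} ->
  exists k0 : 'I_6, forall k : 'I_6, k != k0 ->
    {in [seq v <- nb | cone_idx u v == k] &, forall v w, same_subcone S u v w}.
Proof.
move=> hG; pose unsplit (k : 'I_6) :=
  {in [seq v <- nb | cone_idx u v == k] &, forall v w, same_subcone S u v w}.
have witness k : ~ unsplit k -> exists v w, [/\ v \in nb, w \in nb,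
    cone_idx u v = k, cone_idx u w = k & ~ same_subcone S u v w].
  move=> hk; apply: NNPP => hn; apply: hk => v w.
  rewrite !mem_filter => /andP[/eqP cv hv] /andP[/eqP cw hw].
  by apply: NNPP => hs; apply: hn; exists v, w.
case: (classic (exists k, ~ unsplit k)) => [[k0 /witness hk0]|none]; last first.
  by exists ord0 => k _; apply: NNPP => hk; apply: none; exists k.
exists k0 => k hk; apply: NNPP => /witness [v [w [hv hw cv cw n]]].
have [v0 [w0 [hv0 hw0 cv0 cw0 n0]]] := hk0.
move/eqP: hk; apply; apply: val_inj.
rewrite /= -cv -cv0.
by apply: (split_cone_unique (hG _ hv) (hG _ hw) (hG _ hv0) (hG _ hw0)); rewrite ?cv0 ?cw0 ?cv ?cw.
Qed.

Lemma G15_degree_le15 nb : uniq nb -> (forall v, v \in nb -> G15_edge V S u v) ->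
  (size nb <= 15)%N.
Proof.
move=> hnb hG.
have lt6 : {in nb, forall v, cone_idx u v < 6}%N.
  by move=> v /hG[/Ginf_edge_vertex[hv hvu _] _ _]; case: (cone_idx_vertex hv hvu).
have [k0 unsplit] := one_split_cone hG.
have inG k : {in [seq v <- nb | cone_idx u v == k], forall v, G15_edge V S u v}.
  by move=> v; rewrite mem_filter => /andP[_ /hG].
have inK (k : nat) : {in [seq v <- nb | cone_idx u v == k], forall v, cone_idx u v = k}.
  by move=> v; rewrite mem_filter => /andP[/eqP].
rewrite (size_sum_filter lt6) (bigD1 k0) //=.
have le_k0 := cone_size_le (filter_uniq _ hnb) (inG k0) (inK k0).
have le_rest : (\sum_(k < 6 | k != k0) size [seq v <- nb | cone_idx u v == k] <=
                \sum_(k < 6 | k != k0) cone_capacity k)%N.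
  by apply: leq_sum => k hk; apply: subcone_size_le; rewrite ?filter_uniq //; apply: unsplit.
have total : (\sum_(k < 6) cone_capacity k = 12)%N by rewrite !big_ord_recr big_ord0.
rewrite (bigD1 k0) //= in total.
have cap3 : (cone_capacity k0 <= 3)%N by rewrite /cone_capacity; case: ifP.
apply: leq_trans (leq_add le_k0 le_rest) _.
by rewrite mul2n -addnn -addnA total -[15%N]/(3 + 12)%N leq_add2r.
Qed.

End Wedge.

End Degree.

Unset Implicit Arguments. Set Strict Implicit.

Theorem lemma5 (R : rcfType) (V : seq (pt R)) (S : seq (seq (pt R)))
  (HS : setting V S) (u : pt R) (Hu : u \in V) (nb : seq (pt R)) :
  uniq nb -> (forall v, v \in nb -> G15_edge V S u v) -> (size nb <= 15)%N.
Proof.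
have [F1 [F2 [conv [hidden subconeE]]]] := vertex_wedge HS Hu.
exact: (G15_degree_le15 HS Hu hidden subconeE).
Qed.
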